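(* Let $\Gamma$ be a connected $(Y,Y')$-bipartite graph that is distance-semiregular with respect to $Y$, with intersection numbers $b_i,c_i$ ($0\le i\le4$), and assume every vertex of $Y$ has eccentricity $4$. Let $b'_0$ denote the valency of the vertices of $Y'$. Then $\Gamma$ is the incidence graph of a $(v,b,r,k,\lambda_1,0)$ SPBIBD of type $(b_1,c_3)$ with point set $Y$ and block set $Y'$ (incidence = adjacency), where $$v=1+\frac{b_0b_1}{c_2}+\frac{b_0b_1b_2b_3}{c_2c_3c_4},\quad b=b_0+\frac{b_0b_1b_2}{c_2c_3},\quad r=b_0,\quad k=b'_0,\quad \lambda_1=c_2.$$
   Context: For a connected graph, $\Gamma_i(u)$ is the set of vertices at distance $i$ from $u$, $\Gamma(u)=\Gamma_1(u)$, $\varepsilon(u)$ the eccentricity. For $w\in\Gamma_i(u)$, $b_i(u,w)=|\Gamma_{i+1}(u)\cap\Gamma(w)|$, $c_i(u,w)=|\Gamma_{i-1}(u)\cap\Gamma(w)|$. A graph is $(Y,Y')$-bipartite if its vertex set is $Y\sqcup Y'$ with every edge joining $Y$ to $Y'$. A connected $(Y,Y')$-bipartite graph is distance-semiregular with respect to $Y$ if there are constants $b_i,c_i$ with $b_i(x,w)=b_i$ and $c_i(x,w)=c_i$ for all $x\in Y$, $0\le i\le\varepsilon(x)$, $w\in\Gamma_i(x)$; then vertices of $Y$ have valency $b_0$ and vertices of $Y'$ have valency $b_1+1$. A design $\mathcal{D}=(\mathcal{P},\mathcal{B},\mathcal{I})$ is an incidence structure with $|\mathcal{P}|=v$, $|\mathcal{B}|=b$,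 every block incident with exactly $k$ points and every point with exactly $r$ blocks. $(p,B)$ is a flag if $p\in B$, a non-flag otherwise. $\mathcal{D}$ is a $(v,b,r,k,\lambda_1,\lambda_2)$ SPBIBD of type $(s,t)$ if (i) any two distinct points are together in exactly $\lambda_1$ or exactly $\lambda_2$ blocks; (ii) for every flag $(p,B)$, the number of points of $B$ other than $p$ lying with $p$ in exactly $\lambda_1$ blocks is $s$; (iii) for every non-flag $(p,B)$, the number of points of $B$ lying with $p$ in exactly $\lambda_1$ blocks is $t$. The incidence graph is the bipartite graph on $\mathcal{P}\cup\mathcal{B}$ with $p\sim B$ iff $p\in B$. *)

From mathcomp Require Import all_boot all_order all_algebra.
Set Implicit Arguments. Unset Strict Implicit. Unset Printing Implicit Defensive.

Section Graphs.
Variables (T : finType) (adj : rel T).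

Definition simple_graph := symmetric adj /\ irreflexive adj.
Definition connected_graph := forall u w : T, connect adj u w.

Definition nbhd (w : T) : {set T} := [set z | adj w z].

Definition nbr_set (S : {set T}) : {set T} := [set z | [exists x in S, adj x z]].
Definition ball (n : nat) (u : T) : {set T} :=
  iter n (fun S => S :|: nbr_set S) [set u].

(* graph distance: least n with w in ball n u (equals #|T| if unreachable) *)
Definition dist (u w : T) : nat := find (fun n => w \in ball n u) (iota 0 #|T|).

Definition Gam (i : nat) (u : T) : {set T} := [set w | dist u w == i].

Definition ecc (u : T) : nat := \max_(w : T) dist u w.

Definition b_at (i : nat) (u w : T) : nat := #|Gam i.+1 u :&: nbhd w|.
Definition c_at (i : nat) (u w : T) : nat := #|Gam i.-1 u :&: nbhd w|.

Definition bipartite_wrt (Y : {set T}) :=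
  forall x y, adj x y -> (x \in Y) != (y \in Y).

Definition dist_semiregular (Y : {set T}) (b c : nat -> nat) :=
  forall x, x \in Y -> forall i, i <= ecc x -> forall w, w \in Gam i x ->
    b_at i x w = b i /\ c_at i x w = c i.

Definition lam (B : {set T}) (I : rel T) (p q : T) : nat :=
  #|[set B0 in B | I p B0 && I q B0]|.

Definition SPBIBD (P B : {set T}) (I : rel T)
    (v bb r k l1 l2 s t : nat) : Prop :=
  #|P| = v /\ #|B| = bb /\
  (forall B0, B0 \in B -> #|[set p in P | I p B0]| = k) /\
  (forall p, p \in P -> #|[set B0 in B | I p B0]| = r) /\
  (forall p q, p \in P -> q \in P -> p != q ->
     lam B I p q = l1 \/ lam B I p q = l2) /\
  (forall p B0, p \in P -> B0 \in B -> I p B0 ->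
     #|[set q in P | I q B0 && (q != p) && (lam B I p q == l1)]| = s) /\
  (forall p B0, p \in P -> B0 \in B -> ~~ I p B0 ->
     #|[set q in P | I q B0 && (lam B I p q == l1)]| = t).

End Graphs.

(* Fix a point x of Y and layer the graph by distance from x.  By bipartiteness
   the points are the even layers Γ0, Γ2, Γ4 and the blocks the odd layers Γ1, Γ3,
   and counting the edges between consecutive layers gives
   |Γ(i+1)| c(i+1) = |Γ i| b i, whence v and b.  The blocks through a point p
   form Γ1(p), so two distinct points share a block only at distance 2, and then
   they share exactly c2 blocks: λ2 = 0, λ1 = c2, and "lying with p in λ1 blocks"
   means "at distance 2 from p".  For a flag (p, B) these partners on B are the
   b1 neighbours of B in Γ2(p); for a non-flag, B is in Γ3(p) and they are its
   c3 neighbours in Γ2(p). *)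

From mathcomp Require Import all_boot all_order all_algebra.
From mathcomp Require Import zify ring.
Import GRing.Theory Num.Theory.

Set Implicit Arguments.
Unset Strict Implicit.
Unset Printing Implicit Defensive.

Section Distance.
Variables (T : finType) (adj : rel T).

Lemma in_ballS n u w : (w \in ball adj n.+1 u) =
  (w \in ball adj n u) || [exists z in ball adj n u, adj z w].
Proof. by rewrite /ball iterS in_setU /nbr_set inE. Qed.

Lemma in_ball0 u w : (w \in ball adj 0 u) = (w == u).
Proof. by rewrite /ball /= inE. Qed.

Lemma subset_ball m n u : m <= n -> ball adj m u \subset ball adj n u.
Proof.
move/subnK <-; elim: (n - m) => [|k IH]; first by rewrite add0n.
by rewrite addSn /ball iterS; apply: subset_trans IH (subsetUl _ _).
Qed.

Lemma last_path_in_ball u p : path adj u p -> last u p \in ball adj (size p) u.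
Proof.
elim/last_ind: p => [|p x IH]; first by rewrite /= in_ball0.
rewrite rcons_path last_rcons size_rcons => /andP[/IH pu apx].
by rewrite in_ballS; apply/orP; right; apply/existsP; exists (last u p); rewrite pu.
Qed.

Lemma dist_le_ecc u w : dist adj u w <= ecc adj u.
Proof. exact: (leq_bigmax (F := dist adj u)). Qed.

Hypothesis adj_connected : connected_graph adj.

Lemma in_small_ball u w : exists2 n, n < #|T| & w \in ball adj n u.
Proof.
have /connectP[p pth ->] := adj_connected u w.
case/shortenP: pth => p' pth' uniq_p' _.
exists (size p'); last exact: last_path_in_ball.
by have := max_card (mem (u :: p')); rewrite (card_uniqP uniq_p').
Qed.

Lemma dist_leqE u w n : (dist adj u w <= n) = (w \in ball adj n u).
Proof.
have [m mT wm] := in_small_ball u w.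
have has_ball : has (fun n => w \in ball adj n u) (iota 0 #|T|).
  by apply/hasP; exists m => //; rewrite mem_iota.
have dist_lt : dist adj u w < #|T|.
  by rewrite /dist -[X in _ < X](size_iota 0) -has_find.
have w_dist : w \in ball adj (dist adj u w) u.
  by have := nth_find 0 has_ball; rewrite nth_iota.
have [dn|nd] := leqP (dist adj u w) n.
  by rewrite (subsetP (subset_ball u dn)).
have nT : n < #|T| := ltn_trans nd dist_lt.
by have := before_find 0 nd; rewrite nth_iota // add0n => ->.
Qed.

Lemma dist_eq0 u w : (dist adj u w == 0) = (w == u).
Proof. by rewrite -leqn0 dist_leqE in_ball0. Qed.

Lemma dist_xx u : dist adj u u = 0.
Proof. by apply/eqP; rewrite dist_eq0. Qed.

Lemma dist_adj_leS u x y : adj x y -> dist adj u y <= (dist adj u x).+1.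
Proof.
move=> axy; rewrite dist_leqE in_ballS; apply/orP; right.
by apply/existsP; exists x; rewrite -dist_leqE leqnn.
Qed.

Lemma dist_predP u w n :
  dist adj u w = n.+1 -> exists2 z, adj z w & dist adj u z = n.
Proof.
move=> dw; have : w \in ball adj n.+1 u by rewrite -dist_leqE dw.
rewrite in_ballS -dist_leqE dw ltnn /= => /existsP[z /andP[zn azw]].
exists z => //; apply/eqP; rewrite eqn_leq dist_leqE zn /=.
by have := dist_adj_leS u azw; rewrite dw ltnS.
Qed.

Lemma exists_dist u m : m <= ecc adj u -> exists w, dist adj u w = m.
Proof.
have T_gt0 : 0 < #|T| by apply/card_gt0P; exists u.
have [w eccE] := eq_bigmax (dist adj u) T_gt0.
suff dist_down n z : dist adj u z = n -> m <= n -> exists w, dist adj u w = m.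
  by rewrite /ecc eccE; apply: dist_down.
elim: n z => [|n IH] z dz; first by rewrite leqn0 => /eqP ->; exists z.
rewrite leq_eqVlt => /orP[/eqP ->|]; first by exists z.
by have [z' _ dz'] := dist_predP dz; rewrite ltnS; apply: IH dz'.
Qed.

Lemma Gam0 u : Gam adj 0 u = [set u].
Proof. by apply/setP => w; rewrite !inE dist_eq0. Qed.

Hypothesis adj_irr : irreflexive adj.

Lemma in_Gam1 u w : (w \in Gam adj 1 u) = adj u w.
Proof.
rewrite inE; apply/eqP/idP => [/dist_predP[z azw]|auw].
  by move/eqP; rewrite dist_eq0 => /eqP <-.
apply/eqP; rewrite eqn_leq lt0n dist_eq0.
have := dist_adj_leS u auw; rewrite dist_xx => ->.
by apply: contraTneq auw => ->; rewrite adj_irr.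
Qed.

End Distance.

Lemma setI_Gam (T : finType) (adj : rel T) u i j :
  i != j -> Gam adj i u :&: Gam adj j u = set0.
Proof.
move=> ij; apply/setP => w; rewrite !inE.
by apply: contraNF ij => /andP[/eqP <- /eqP <-].
Qed.

Lemma card_setI_predE (T : finType) (A : {set T}) (P : pred T) :
  #|A :&: [set z | P z]| = \sum_(z in A) P z.
Proof.
rewrite -sum1_card big_mkcond [RHS]big_mkcond /=.
by apply: eq_bigr => z _; rewrite !inE; case: (z \in A); case: (P z).
Qed.

Lemma sum_card_nbhd_sym (T : finType) (adj : rel T) (A B : {set T}) :
  symmetric adj ->
  \sum_(w in A) #|B :&: nbhd adj w| = \sum_(z in B) #|A :&: nbhd adj z|.
Proof.
move=> adj_sym; rewrite /nbhd.
under eq_bigr => w _ do rewrite card_setI_predE.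
under [RHS]eq_bigr => z _ do rewrite card_setI_predE.
by rewrite exchange_big; apply: eq_bigr => z _; apply: eq_bigr => w _; rewrite adj_sym.
Qed.

Section Bipartite.
Variables (T : finType) (adj : rel T) (Y : {set T}).
Hypothesis adj_bip : bipartite_wrt adj Y.

Lemma notin_bipartite_adj p w : p \in Y -> adj p w -> w \notin Y.
Proof. by move=> pY /adj_bip; rewrite pY; case: (w \in Y). Qed.

Lemma in_bipartite_adj p w : w \notin Y -> adj p w -> p \in Y.
Proof. by move=> wY /adj_bip; rewrite (negbTE wY); case: (p \in Y). Qed.

Hypothesis adj_connected : connected_graph adj.

Lemma in_bipartite_dist u w : u \in Y -> (w \in Y) = ~~ odd (dist adj u w).
Proof.
move=> uY; suff parity n z : dist adj u z = n -> (z \in Y) = ~~ odd n by apply: parity.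
elim: n z => [|n IH] z dz.
  by move/eqP: dz; rewrite (dist_eq0 adj_connected) => /eqP ->.
have [z' az'z dz'] := dist_predP adj_connected dz.
by have := adj_bip az'z; rewrite (IH z' dz') /=; case: (z \in Y); case: (odd n).
Qed.

Hypothesis adj_sym : symmetric adj.
Hypothesis adj_irr : irreflexive adj.

Lemma lam_Gam1 p q : p \in Y -> lam (~: Y) adj p q = #|Gam adj 1 p :&: nbhd adj q|.
Proof.
move=> pY; apply: eq_card => B; rewrite in_setI in_Gam1 // /nbhd !inE.
by case apB: (adj p B); rewrite ?andbF //= (notin_bipartite_adj pY apB).
Qed.

Lemma lam_dist_gt2 p q : p \in Y -> 2 < dist adj p q -> lam (~: Y) adj p q = 0.
Proof.
move=> pY d_gt2; rewrite lam_Gam1 //; apply/eqP; rewrite cards_eq0; apply/eqP.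
apply/setP => B; rewrite in_setI /nbhd !inE; apply/negbTE/andP => [[/eqP dB]].
rewrite adj_sym => aBq.
by have := dist_adj_leS adj_connected p aBq; rewrite dB; lia.
Qed.

End Bipartite.

Section Semiregular.
Variables (T : finType) (adj : rel T) (Y : {set T}) (b c : nat -> nat).
Hypothesis adj_sym : symmetric adj.
Hypothesis adj_irr : irreflexive adj.
Hypothesis adj_connected : connected_graph adj.
Hypothesis adj_bip : bipartite_wrt adj Y.
Hypothesis adj_dsr : dist_semiregular adj Y b c.

Lemma semiregular_Gam x i w : x \in Y -> w \in Gam adj i x ->
  b_at adj i x w = b i /\ c_at adj i x w = c i.
Proof.
move=> xY wG; apply: adj_dsr => //.
by move: wG; rewrite inE => /eqP <-; apply: dist_le_ecc.
Qed.

Lemma c_gt0 x i : x \in Y -> 0 < i <= ecc adj x -> 0 < c i.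
Proof.
case: i => // i xY /andP[_ i_ecc]; have [w dw] := exists_dist adj_connected i_ecc.
have wG : w \in Gam adj i.+1 x by rewrite inE dw.
have [_ <-] := semiregular_Gam xY wG.
have [z azw dz] := dist_predP adj_connected dw.
by apply/card_gt0P; exists z; rewrite !inE dz eqxx adj_sym.
Qed.

Lemma card_Gam1 x : x \in Y -> #|Gam adj 1 x| = b 0.
Proof.
move=> xY; have xG0 : x \in Gam adj 0 x by rewrite Gam0 // set11.
have [<- _] := semiregular_Gam xY xG0.
by apply: eq_card => w; rewrite in_setI in_Gam1 // /nbhd inE andbb.
Qed.

Lemma card_Gam_mul_b x i : x \in Y ->
  #|Gam adj i x| * b i = #|Gam adj i.+1 x| * c i.+1.
Proof.
move=> xY; rewrite -!sum_nat_const.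
rewrite -(eq_bigr _ (fun w wi => proj1 (semiregular_Gam xY wi))).
rewrite -(eq_bigr _ (fun w wi => proj2 (semiregular_Gam xY wi))).
exact: sum_card_nbhd_sym.
Qed.

Lemma card_GamS (R : numFieldType) x i : x \in Y -> i < ecc adj x ->
  (#|Gam adj i.+1 x|%:R = (#|Gam adj i x| * b i)%:R / (c i.+1)%:R :> R)%R.
Proof.
move=> xY i_ecc; rewrite card_Gam_mul_b // natrM mulfK // pnatr_eq0 -lt0n.
exact: (c_gt0 xY).
Qed.

Lemma lam_dist2 p q : p \in Y -> dist adj p q = 2 -> lam (~: Y) adj p q = c 2.
Proof.
move=> pY d2; rewrite lam_Gam1 //.
have qG2 : q \in Gam adj 2 p by rewrite inE d2.
by have [] := semiregular_Gam pY qG2.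
Qed.

Hypothesis ecc_Y : forall x, x \in Y -> ecc adj x = 4.

Lemma dist_le4 x w : x \in Y -> dist adj x w <= 4.
Proof. by move=> xY; rewrite -(ecc_Y xY) dist_le_ecc. Qed.

Lemma dist_points_2_or_4 p q : p \in Y -> q \in Y -> q != p ->
  dist adj p q = 2 \/ dist adj p q = 4.
Proof.
move=> pY; rewrite (in_bipartite_dist adj_bip adj_connected _ pY).
rewrite -(dist_eq0 adj_connected); move: (dist_le4 q pY).
by case: (dist adj p q) => [|[|[|[|[|d]]]]] //=; auto.
Qed.

Lemma lam_eq_c2 p q : p \in Y -> q \in Y -> q != p ->
  (lam (~: Y) adj p q == c 2) = (dist adj p q == 2).
Proof.
move=> pY qY qp; have [d2|d4] := dist_points_2_or_4 pY qY qp.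
  by rewrite d2 lam_dist2 // !eqxx.
rewrite d4 lam_dist_gt2 ?d4 // eq_sym eqn0Ngt (c_gt0 pY) //.
by rewrite ecc_Y.
Qed.

Lemma in_Gam3_nonflag p B : p \in Y -> B \in ~: Y -> ~~ adj p B -> B \in Gam adj 3 p.
Proof.
move=> pY; rewrite inE (in_bipartite_dist adj_bip adj_connected _ pY).
rewrite -(in_Gam1 adj_connected adj_irr) !inE negbK; move: (dist_le4 B pY).
by case: (dist adj p B) => [|[|[|[|[|d]]]]].
Qed.

Lemma card_block B : B \in ~: Y -> #|[set p in Y | adj p B]| = #|nbhd adj B|.
Proof.
rewrite inE => BY; apply: eq_card => p; rewrite !inE (adj_sym B p).
exact/andb_idl/(in_bipartite_adj adj_bip BY).
Qed.

Lemma card_blocks_through p : p \in Y -> #|[set B in ~: Y | adj p B]| = b 0.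
Proof.
move=> pY; rewrite -(card_Gam1 pY); apply: eq_card => B; rewrite in_Gam1 // !inE.
exact/andb_idl/(notin_bipartite_adj adj_bip pY).
Qed.

Lemma card_flag_partners p B : p \in Y -> B \in ~: Y -> adj p B ->
  #|[set q in Y | adj q B && (q != p) && (lam (~: Y) adj p q == c 2)]| = b 1.
Proof.
move=> pY; rewrite inE => BY apB; have BG1 : B \in Gam adj 1 p by rewrite in_Gam1.
have [<- _] := semiregular_Gam pY BG1.
apply: eq_card => q; rewrite in_setI /nbhd !inE (adj_sym B q).
case aqB: (adj q B); rewrite ?andbF ?andbT //=.
have qY := in_bipartite_adj adj_bip BY aqB; rewrite qY /=.
have [->|qp] := eqVneq q p; first by rewrite dist_xx.
by rewrite lam_eq_c2.
Qed.

Lemma card_nonflag_partners p B : p \in Y -> B \in ~: Y -> ~~ adj p B ->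
  #|[set q in Y | adj q B && (lam (~: Y) adj p q == c 2)]| = c 3.
Proof.
move=> pY BY napB; have BG3 := in_Gam3_nonflag pY BY napB.
rewrite inE in BY.
have [_ <-] := semiregular_Gam pY BG3.
apply: eq_card => q; rewrite in_setI /nbhd !inE (adj_sym B q).
case aqB: (adj q B); rewrite ?andbF ?andbT //=.
have qY := in_bipartite_adj adj_bip BY aqB; rewrite qY /= lam_eq_c2 //.
by apply: contraNneq napB => <-.
Qed.

Lemma SPBIBD_ecc4 k : (forall B, B \in ~: Y -> #|nbhd adj B| = k) ->
  SPBIBD Y (~: Y) adj #|Y| #|~: Y| (b 0) k (c 2) 0 (b 1) (c 3).
Proof.
move=> deg_blocks; do 2!split=> //; split.
  by move=> B BY; rewrite card_block ?deg_blocks.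
split; first exact: card_blocks_through.
split; last by split; [exact: card_flag_partners | exact: card_nonflag_partners].
move=> p q pY qY; rewrite eq_sym => qp.
have [d2|d4] := dist_points_2_or_4 pY qY qp; [left; exact: lam_dist2 | right].
by apply: lam_dist_gt2; rewrite ?d4.
Qed.

Lemma card_Y_Gam x : x \in Y -> #|Y| = 1 + #|Gam adj 2 x| + #|Gam adj 4 x|.
Proof.
move=> xY; have -> : Y = Gam adj 0 x :|: Gam adj 2 x :|: Gam adj 4 x.
  apply/setP => w; rewrite !inE (in_bipartite_dist adj_bip adj_connected _ xY).
  by move: (dist_le4 w xY); case: (dist adj x w) => [|[|[|[|[|d]]]]].
rewrite cardsU setIUl !setI_Gam // setU0 cards0 subn0.
by rewrite cardsU setI_Gam // cards0 subn0 Gam0 // cards1.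
Qed.

Lemma card_notY_Gam x : x \in Y -> #|~: Y| = #|Gam adj 1 x| + #|Gam adj 3 x|.
Proof.
move=> xY; have -> : ~: Y = Gam adj 1 x :|: Gam adj 3 x.
  apply/setP => w; rewrite !inE (in_bipartite_dist adj_bip adj_connected _ xY).
  by move: (dist_le4 w xY); case: (dist adj x w) => [|[|[|[|[|d]]]]].
by rewrite cardsU setI_Gam // cards0 subn0.
Qed.

End Semiregular.

Local Open Scope ring_scope.

Theorem lemma5p1 (T : finType) (adj : rel T) (Y : {set T})
    (b c : nat -> nat) (b0' : nat) :
  simple_graph adj ->
  connected_graph adj ->
  bipartite_wrt adj Y ->
  Y != set0 ->
  dist_semiregular adj Y b c ->
  (forall x, x \in Y -> ecc adj x = 4%N) ->
  (forall y, y \in ~: Y -> #|nbhd adj y| = b0') ->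
  let v := #|Y| in let bb := #|~: Y| in
  [/\ SPBIBD Y (~: Y) adj v bb (b 0%N) b0' (c 2%N) 0 (b 1%N) (c 3%N),
      (v%:R : rat) = 1 + ((b 0%N * b 1%N)%:R / (c 2%N)%:R)
                       + ((b 0%N * b 1%N * b 2%N * b 3%N)%:R
                          / (c 2%N * c 3%N * c 4%N)%:R)
    & (bb%:R : rat) = (b 0%N)%:R
                      + (b 0%N * b 1%N * b 2%N)%:R / (c 2%N * c 3%N)%:R].
Proof.
move=> [adj_sym adj_irr] conn bip /set0Pn[x xY] dsr ecc4 deg_blocks v bb.
have c_neq0 i : (0 < i <= 4)%N -> (c i)%:R != 0 :> rat.
  by move=> i4; rewrite pnatr_eq0 -lt0n (c_gt0 adj_sym conn dsr xY) ?ecc4.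
have GamS i : (i < 4)%N ->
    #|Gam adj i.+1 x|%:R = (#|Gam adj i x| * b i)%:R / (c i.+1)%:R :> rat.
  by move=> i4; apply: (card_GamS adj_sym conn dsr _ xY); rewrite ecc4.
split.
- exact: SPBIBD_ecc4.
- rewrite /v (card_Y_Gam conn bip ecc4 xY) !natrD (GamS 3%N) // natrM (GamS 2%N) //.
  rewrite natrM (GamS 1%N) // !natrM (card_Gam1 adj_irr conn dsr xY).
  by field; rewrite !c_neq0.
- rewrite /bb (card_notY_Gam conn bip ecc4 xY) natrD (GamS 2%N) // natrM.
  rewrite (GamS 1%N) // !natrM (card_Gam1 adj_irr conn dsr xY).
  by field; rewrite !c_neq0.
Qed.
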